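(* Let $d\ge 1$ be an integer and let $n$ be a positive integer that has no prime divisor less than $2^d$. Then $n^{d-1}$ queens can be placed on $\mathbb{Z}_n^d$ without conflict.
   Context: A queen on $\mathbb{Z}_n^d$ can move any number of times by a vector $\mathbf{x}\in\{-1,0,1\}^d\setminus\{\mathbf{0}\}$ (coordinates modulo $n$). Queens occupy distinct fields; two queens at distinct fields $\mathbf{u},\mathbf{v}\in\mathbb{Z}_n^d$ are in conflict if $\mathbf{v}-\mathbf{u}=t\mathbf{x}$ for some $t\in\mathbb{Z}_n$ and some nonzero $\mathbf{x}\in\{-1,0,1\}^d$. A placement is without conflict if no two queens are in conflict. *)

From mathcomp Require Import all_boot all_order all_algebra.
Set Implicit Arguments. Unset Strict Implicit. Unset Printing Implicit Defensive.
Import GRing.Theory Num.Theory.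

Definition field (n d : nat) := {ffun 'I_d -> 'I_n}.

Definition queen_dir (d : nat) (x : 'I_d -> int) : Prop :=
  (forall i, x i \in [:: (-1)%R; 0%R; 1%R]) /\ (exists i, x i != 0%R).

Definition in_conflict (n d : nat) (u v : field n d) : Prop :=
  u <> v /\
  exists (t : int) (x : 'I_d -> int), queen_dir x /\
    forall i, ((nat_of_ord (v i))%:Z = (nat_of_ord (u i))%:Z + t * x i %[mod n])%Z.

Definition conflict_free (n d : nat) (Q : {set field n d}) : Prop :=
  forall u v, u \in Q -> v \in Q -> ~ in_conflict u v.

(* The queens are the points of the hyperplane sum_i 2^i u_i = 0 (mod n),
   which has n^(d-1) points because the coefficient of u_0 is 1.  If two of
   them differ by t x (mod n) along a queen direction x, then n divides
   t * sum_i 2^i x_i.  Since the x_i lie in {-1, 0, 1}, this signed binary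
   number is nonzero and of absolute value below 2^d, so it is coprime to n;
   hence n divides t and the two queens coincide. *)

From mathcomp Require Import all_boot all_order all_algebra.
From mathcomp Require Import zify ring.
Import GRing.Theory Num.Theory.
Set Implicit Arguments. Unset Strict Implicit. Unset Printing Implicit Defensive.

Local Open Scope ring_scope.

Lemma coprime_lt_least_prime n m b :
  (forall p, prime p -> p %| n -> b <= p)%N -> (0 < m < b)%N -> coprime n m.
Proof.
move=> hp /andP[m_gt0 m_lt_b]; apply/negPn/negP => ncop.
have g_gt1 : (1 < gcdn n m)%N by rewrite ltn_neqAle eq_sym ncop gcdn_gt0 m_gt0 orbT.
have p_dvd := pdiv_dvd (gcdn n m).
have := hp _ (pdiv_prime g_gt1) (dvdn_trans p_dvd (dvdn_gcdl _ _)).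
have := dvdn_leq m_gt0 (dvdn_trans p_dvd (dvdn_gcdr _ _)).
lia.
Qed.

Lemma signed_binary_recl k (y : 'I_k.+1 -> int) :
  \sum_(i < k.+1) (2 ^ i)%:Z * y i
  = y ord0 + 2 * \sum_(i < k) (2 ^ i)%:Z * y (lift ord0 i).
Proof.
rewrite big_ord_recl mul1r mulr_sumr; congr (_ + _).
by apply: eq_bigr => i _; rewrite /= /bump /= expnS PoszM mulrA.
Qed.

Lemma signed_binary_lt k (y : 'I_k -> int) :
  (forall i, `|y i| <= 1) -> `|\sum_(i < k) (2 ^ i)%:Z * y i| < (2 ^ k)%:Z.
Proof.
elim: k y => [|k IH] y y_le1; first by rewrite big_ord0.
have := IH _ (fun i => y_le1 (lift ord0 i)); have := y_le1 ord0.
rewrite signed_binary_recl expnS PoszM; set S := \sum_(i < k) _; lia.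
Qed.

Lemma signed_binary_eq0 k (y : 'I_k -> int) :
  (forall i, `|y i| <= 1) -> \sum_(i < k) (2 ^ i)%:Z * y i = 0 -> forall i, y i = 0.
Proof.
elim: k y => [|k IH] y y_le1; first by move=> _ [].
have := y_le1 ord0; rewrite signed_binary_recl; set S := \sum_(i < k) _ => y0_le1 sum0.
have y0 : y ord0 = 0 by lia.
have S0 : S = 0 by lia.
move=> i; case: (unliftP ord0 i) => [j ->|-> //].
exact: IH (fun j => y_le1 (lift ord0 j)) S0 j.
Qed.

Lemma ord_eq_modz n (a b : 'I_n) : (n %| a%:Z - b%:Z)%Z -> a = b.
Proof.
rewrite -eqz_mod_dvd !modz_nat !modn_small // => /eqP [].
exact: val_inj.
Qed.

Lemma field_eq_modz n d (u v : field n d) :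
  (forall i, n %| (u i)%:Z - (v i)%:Z)%Z -> u = v.
Proof. by move=> uv; apply/ffunP => i; apply: ord_eq_modz. Qed.

Lemma exists_ord_dvdz n (s : int) : (0 < n)%N -> exists r : 'I_n, (n %| r%:Z + s)%Z.
Proof.
move=> n_gt0.
have r_ge0 : 0 <= ((- s) %% n)%Z by rewrite modz_ge0 // -lt0n.
have r_lt_n : (`|((- s) %% n)%Z| < n)%N by rewrite -ltz_nat gez0_abs // ltz_pmod.
exists (Ordinal r_lt_n); rewrite /= gez0_abs //.
move: (divz_eq (- s) n); set q := (_ %/ _)%Z; set r := (_ %% _)%Z => def_s.
rewrite (_ : r + s = - (q * n)) ?rpredN ?dvdz_mull //.
by rewrite -[s]opprK def_s; ring.
Qed.

Definition hyperplane n d (w : 'I_d -> int) : {set field n d} :=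
  [set u : field n d | (n %| \sum_i w i * (u i)%:Z)%Z].

Lemma card_hyperplane n k (w : 'I_k.+1 -> int) :
  (0 < n)%N -> w ord0 = 1 -> #|hyperplane n w| = (n ^ k)%N.
Proof.
move=> n_gt0 w0.
pose tail (u : field n k.+1) : field n k := [ffun j => u (lift ord0 j)].
pose s (g : field n k) := \sum_(j < k) w (lift ord0 j) * (g j)%:Z.
have memQ u : (u \in hyperplane n w) = (n %| (u ord0)%:Z + s (tail u))%Z.
  by rewrite inE big_ord_recl w0 mul1r /s; under [in RHS]eq_bigr do rewrite ffunE.
have tail_inj : {in hyperplane n w &, injective tail}.
  move=> u v; rewrite !memQ => Qu Qv tuv; apply/ffunP => i.
  case: (unliftP ord0 i) => [j ->|->].
    by have := congr1 (fun f : field n k => f j) tuv; rewrite !ffunE.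
  apply: ord_eq_modz; rewrite tuv in Qu.
  by rewrite (_ : _ - _ = (u ord0)%:Z + s (tail v) - ((v ord0)%:Z + s (tail v))) ?rpredB //; ring.
rewrite -(card_in_imset tail_inj) (_ : (n ^ k)%N = #|[set: field n k]|); last first.
  by rewrite cardsT card_ffun !card_ord.
apply: eq_card => g; rewrite in_setT.
have [r Qr] := exists_ord_dvdz (s g) n_gt0.
pose u : field n k.+1 := [ffun i => if unlift ord0 i is Some j then g j else r].
have tail_u : tail u = g by apply/ffunP => j; rewrite !ffunE liftK.
apply/imsetP; exists u => //.
by rewrite memQ tail_u ffunE unlift_none.
Qed.

Lemma hyperplane_conflict_free (n d : nat) (w : 'I_d -> int) :
  (forall x, queen_dir x -> coprimez n (\sum_i w i * x i)) ->
  conflict_free (hyperplane n w).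
Proof.
move=> cop_w u v; rewrite !inE => Qu Qv [neq_uv [t [x [qx uvx]]]]; apply: neq_uv.
have dvd_uvx i : (n %| (v i)%:Z - (u i)%:Z - t * x i)%Z.
  by move/eqP: (uvx i); rewrite eqz_mod_dvd opprD addrA.
have dvd_tx : (n %| t * \sum_i w i * x i)%Z.
  rewrite (_ : t * _ = \sum_i w i * (v i)%:Z - \sum_i w i * (u i)%:Z
                       - \sum_i w i * ((v i)%:Z - (u i)%:Z - t * x i)).
    by rewrite !rpredB // rpred_sum // => i _; rewrite dvdz_mull.
  by rewrite mulr_sumr -!sumrB; apply: eq_bigr => i _; ring.
have dvd_t : (n %| t)%Z by rewrite -(Gauss_dvdzl t (cop_w x qx)).
apply: field_eq_modz => i.
rewrite (_ : _ - _ = - ((v i)%:Z - (u i)%:Z - t * x i) - t * x i); last by ring.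
by rewrite rpredB ?rpredN // dvdz_mulr.
Qed.

Local Close Scope ring_scope.

Theorem mainTheorem7 (d n : nat) (hd : 1 <= d) (hn : 0 < n)
  (hp : forall p, prime p -> p %| n -> 2 ^ d <= p) :
  exists Q : {set field n d}, #|Q| = n ^ d.-1 /\ conflict_free Q.
Proof.
case: d hd hp => // k _ hp.
exists (hyperplane n (fun i : 'I_k.+1 => (2 ^ i)%:Z%R)); split.
  exact: card_hyperplane.
apply: hyperplane_conflict_free => x [x_dir [i0 x_i0]].
have x_le1 i : (`|x i| <= 1)%R by move: (x_dir i); rewrite !inE => /or3P[]/eqP->.
rewrite coprimezE /=; apply: coprime_lt_least_prime hp _.
rewrite absz_gt0 -ltz_nat abszE signed_binary_lt // andbT.
by apply: contra x_i0 => /eqP/signed_binary_eq0-/(_ x_le1 i0)->.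
Qed.
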